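(* Let $\mathbf z=(z_i)_{i=1}^N$ be a crystal. Then for every $\mathbf h=(h_i)_{i=1}^N\in(\mathbb R^d)^N$, $$(\mathbf h,\mathrm{Hess}H(\mathbf z)\mathbf h)=\frac{\check c}{a^2}\sum_{\langle i,j\rangle}(h_i-h_j,z_i-z_j)^2\ge0,$$ where the sum is over all pairs $\{i,j\}$ with $|z_i-z_j|=a$.
   Context: Let $d\ge1$ and $U\in C^3_0(\mathbb R)$ even, with a unique $a>0$ such that $U(a)=\min_{r\ge0}U(r)$, and $\check c:=U''(a)>0$; $U(x)=U(|x|)$ for $x\in\mathbb R^d$; $b=\inf\{r>0:U(s)=0\text{ for all }s>r\}$. $H(\mathbf x)=\sum_{1\le i<j\le N}U(x_i-x_j)$ for $\mathbf x\in(\mathbb R^d)^N$. A crystal is $\mathbf z\in(\mathbb R^d)^N$ such that for every $i\ne j$, $|z_i-z_j|=a$ or $|z_i-z_j|>b$. $\mathrm{Hess}H(\mathbf x)=(\partial^2H/\partial x_i^\alpha\partial x_j^\beta)$ and $(\mathbf h,\mathrm{Hess}H(\mathbf x)\mathbf h)=\sum_{i,j}\sum_{\alpha,\beta}\frac{\partial^2H}{\partial x_i^\alpha\partial x_j^\beta}(\mathbf x)h_i^\alpha h_j^\beta$. *)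

From Stdlib Require Import Reals Lra.
From Coquelicot Require Import Coquelicot.
Open Scope R_scope.

Fixpoint rsum (n : nat) (f : nat -> R) : R :=
  match n with
  | O => 0
  | S m => rsum m f + f m
  end.

(* A configuration (x_i)_{i<N} in (R^d)^N is encoded as x : nat -> nat -> R,
   x i alpha = alpha-th coordinate of the i-th particle (i < N, alpha < d). *)
Definition config := nat -> nat -> R.

Definition dotd (d : nat) (u v : nat -> R) : R := rsum d (fun al => u al * v al).
Definition normd (d : nat) (v : nat -> R) : R := sqrt (dotd d v v).

Definition diffv (x : config) (i j : nat) : nat -> R := fun al => x i al - x j al.

Definition Hpot (U : R -> R) (N d : nat) (x : config) : R :=
  rsum N (fun j => rsum j (fun i => U (normd d (diffv x i j)))).

Definition upd (x : config) (i al : nat) (t : R) : config :=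
  fun k be => if andb (Nat.eqb k i) (Nat.eqb be al) then t else x k be.

Definition pderiv (i al : nat) (F : config -> R) (x : config) : R :=
  Derive (fun t => F (upd x i al t)) (x i al).

Definition hess (F : config -> R) (x : config) (i al j be : nat) : R :=
  pderiv i al (pderiv j be F) x.

Definition hess_form (N d : nat) (F : config -> R) (x h : config) : R :=
  rsum N (fun i => rsum N (fun j => rsum d (fun al => rsum d (fun be =>
    hess F x i al j be * h i al * h j be)))).

(* b = inf { r > 0 : U(s) = 0 for all s > r }  (in Rbar; +oo if the set is empty) *)
Definition b_of (U : R -> R) : Rbar :=
  Glb_Rbar (fun r => 0 < r /\ forall s, r < s -> U s = 0).

Definition crystal (U : R -> R) (a : R) (N d : nat) (z : config) : Prop :=
  forall i j, (i < N)%nat -> (j < N)%nat -> i <> j ->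
    normd d (diffv z i j) = a \/ Rbar_lt (b_of U) (Finite (normd d (diffv z i j))).

Definition bond_sum (a : R) (N d : nat) (z h : config) : R :=
  rsum N (fun j => rsum j (fun i =>
    if Req_EM_T (normd d (diffv z i j)) a
    then (dotd d (diffv h i j) (diffv z i j)) ^ 2 else 0)).

From Stdlib Require Import Reals Lra Lia Classical.
From Coquelicot Require Import Coquelicot.
Open Scope R_scope.

(* At a configuration where |z_k - z_l| = r > 0 and U'(r) = 0, the Hessian of the pair term
   U(|x_k - x_l|) is U''(r)/r^2 times the square of the component of h_k - h_l along z_k - z_l:
   the transversal part U'(r)/r of the Hessian vanishes.  In a crystal every pair is either a
   bond (r = a, and U'(a) = 0 because a minimises U on [0, oo)) or farther apart than b, where U
   vanishes near r, so that U'(r) = U''(r) = 0.  Summing over pairs gives the formula, and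
   U''(a) > 0 gives its sign. *)

Lemma rsum_ext n f g : (forall m, (m < n)%nat -> f m = g m) -> rsum n f = rsum n g.
Proof.
  induction n as [|n IH]; intros Hfg; simpl; [reflexivity|].
  rewrite IH by (intros m Hm; apply Hfg; lia).
  rewrite Hfg by lia; reflexivity.
Qed.

Lemma rsum_plus n f g : rsum n (fun m => f m + g m) = rsum n f + rsum n g.
Proof. induction n as [|n IH]; simpl; [ring | rewrite IH; ring]. Qed.

Lemma rsum_minus n f g : rsum n (fun m => f m - g m) = rsum n f - rsum n g.
Proof. induction n as [|n IH]; simpl; [ring | rewrite IH; ring]. Qed.

Lemma rsum_mult_l n c f : rsum n (fun m => c * f m) = c * rsum n f.
Proof. induction n as [|n IH]; simpl; [ring | rewrite IH; ring]. Qed.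

Lemma rsum_mult_r n c f : rsum n (fun m => f m * c) = rsum n f * c.
Proof. induction n as [|n IH]; simpl; [ring | rewrite IH; ring]. Qed.

Lemma rsum_0 n : rsum n (fun _ => 0) = 0.
Proof. induction n as [|n IH]; simpl; [ring | rewrite IH; ring]. Qed.

Lemma rsum_nonneg n f : (forall m, (m < n)%nat -> 0 <= f m) -> 0 <= rsum n f.
Proof.
  induction n as [|n IH]; intros Hf; simpl; [lra|].
  apply Rplus_le_le_0_compat; [apply IH; intros m Hm|]; apply Hf; lia.
Qed.

Lemma rsum_kronecker n k f : (k < n)%nat -> rsum n (fun m => if m =? k then f m else 0) = f k.
Proof.
  induction n as [|n IH]; intros Hk; [lia|]; simpl.
  destruct (Nat.eq_dec k n) as [->|Hkn].
  - rewrite Nat.eqb_refl, (rsum_ext _ _ (fun _ => 0)), rsum_0; [ring|].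
    intros m Hm; destruct (Nat.eqb_spec m n); [lia | reflexivity].
  - rewrite IH by lia; destruct (Nat.eqb_spec n k); [lia | ring].
Qed.

Lemma is_derive_rsum n (f : nat -> R -> R) df x :
  (forall m, (m < n)%nat -> is_derive (f m) x (df m)) ->
  is_derive (fun t => rsum n (fun m => f m t)) x (rsum n df).
Proof.
  induction n as [|n IH]; intros Hf; simpl.
  - apply (is_derive_const (V := R_NormedModule)).
  - apply (is_derive_plus (fun t => rsum n (fun m => f m t)) (f n));
      [apply IH; intros m Hm|]; apply Hf; lia.
Qed.

Lemma locally_forall_lt (x : R) n (P : nat -> R -> Prop) :
  (forall m, (m < n)%nat -> locally x (P m)) ->
  locally x (fun t => forall m, (m < n)%nat -> P m t).
Proof.
  induction n as [|n IH]; intros HP.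
  - apply filter_forall; intros; lia.
  - apply filter_imp with (fun t => (forall m, (m < n)%nat -> P m t) /\ P n t).
    + intros t [Hlt Hn] m Hm; destruct (Nat.eq_dec m n) as [->|]; [exact Hn | apply Hlt; lia].
    + apply filter_and; [apply IH; intros m Hm|]; apply HP; lia.
Qed.

Definition pair_sum (N : nat) (G : nat -> nat -> R) : R :=
  rsum N (fun l => rsum l (fun k => G k l)).

Lemma pair_sum_ext N G G' :
  (forall k l, (k < l)%nat -> (l < N)%nat -> G k l = G' k l) -> pair_sum N G = pair_sum N G'.
Proof.
  intros HG; apply rsum_ext; intros l Hl; apply rsum_ext; intros k Hk; apply HG; assumption.
Qed.

Lemma pair_sum_mult_l N c G : pair_sum N (fun k l => c * G k l) = c * pair_sum N G.
Proof.
  unfold pair_sum; rewrite <- rsum_mult_l; apply rsum_ext; intros; apply rsum_mult_l.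
Qed.

Lemma pair_sum_nonneg N G :
  (forall k l, (k < l)%nat -> (l < N)%nat -> 0 <= G k l) -> 0 <= pair_sum N G.
Proof.
  intros HG; apply rsum_nonneg; intros l Hl; apply rsum_nonneg; intros k Hk; apply HG; assumption.
Qed.

Lemma is_derive_pair_sum N (G : nat -> nat -> R -> R) dG x :
  (forall k l, (k < l)%nat -> (l < N)%nat -> is_derive (G k l) x (dG k l)) ->
  is_derive (fun t => pair_sum N (fun k l => G k l t)) x (pair_sum N dG).
Proof.
  intros HG; apply is_derive_rsum; intros l Hl; apply is_derive_rsum; intros k Hk; apply HG; assumption.
Qed.

Lemma locally_forall_pairs (x : R) N (P : nat -> nat -> R -> Prop) :
  (forall k l, (k < l)%nat -> (l < N)%nat -> locally x (P k l)) ->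
  locally x (fun t => forall k l, (k < l)%nat -> (l < N)%nat -> P k l t).
Proof.
  intros HP.
  apply filter_imp with (fun t => forall l, (l < N)%nat -> forall k, (k < l)%nat -> P k l t).
  - intros t Ht k l Hk Hl; apply Ht; assumption.
  - apply locally_forall_lt; intros l Hl; apply locally_forall_lt; intros k Hk; apply HP; assumption.
Qed.

Definition qform (N d : nat) (M : nat -> nat -> nat -> nat -> R) (h : config) : R :=
  rsum N (fun i => rsum N (fun j => rsum d (fun al => rsum d (fun be =>
    M i al j be * h i al * h j be)))).

Lemma qform_ext N d M M' h :
  (forall i al j be, (i < N)%nat -> (al < d)%nat -> (j < N)%nat -> (be < d)%nat ->
     M i al j be = M' i al j be) ->
  qform N d M h = qform N d M' h.
Proof.
  intros HM; unfold qform.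
  apply rsum_ext; intros i Hi; apply rsum_ext; intros j Hj;
  apply rsum_ext; intros al Hal; apply rsum_ext; intros be Hbe.
  rewrite HM by assumption; reflexivity.
Qed.

Lemma qform_plus N d M1 M2 h :
  qform N d (fun i al j be => M1 i al j be + M2 i al j be) h = qform N d M1 h + qform N d M2 h.
Proof.
  unfold qform.
  do 4 (rewrite <- rsum_plus; apply rsum_ext; intros ? _).
  ring.
Qed.

Lemma qform_0 N d h : qform N d (fun _ _ _ _ => 0) h = 0.
Proof.
  unfold qform.
  do 4 (rewrite (rsum_ext _ _ (fun _ => 0)); [apply rsum_0 | intros ? _]).
  ring.
Qed.

Lemma qform_rsum N d n G h :
  qform N d (fun i al j be => rsum n (fun m => G m i al j be)) h
  = rsum n (fun m => qform N d (G m) h).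
Proof.
  induction n as [|n IH]; simpl; [apply qform_0|].
  rewrite qform_plus, IH; reflexivity.
Qed.

Lemma qform_pair_sum N d n G h :
  qform N d (fun i al j be => pair_sum n (fun k l => G k l i al j be)) h
  = pair_sum n (fun k l => qform N d (G k l) h).
Proof.
  unfold pair_sum; rewrite qform_rsum; apply rsum_ext; intros; apply qform_rsum.
Qed.

Lemma qform_rank_one N d K g h :
  qform N d (fun i al j be => K * g i al * g j be) h
  = K * (rsum N (fun i => rsum d (fun al => g i al * h i al))) ^ 2.
Proof.
  set (S := fun i => rsum d (fun al => g i al * h i al)).
  unfold qform.
  transitivity (rsum N (fun i => rsum N (fun j => K * S i * S j))).
  - apply rsum_ext; intros i _; apply rsum_ext; intros j _.
    transitivity (rsum d (fun al => K * (g i al * h i al) * S j)).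
    + apply rsum_ext; intros al _; unfold S.
      rewrite <- rsum_mult_l; apply rsum_ext; intros; ring.
    + rewrite rsum_mult_r, rsum_mult_l; reflexivity.
  - transitivity (rsum N (fun i => K * S i * rsum N S)).
    + apply rsum_ext; intros i _; apply rsum_mult_l.
    + rewrite rsum_mult_r, rsum_mult_l; ring.
Qed.

Definition incid (i k l : nat) : R := (if i =? k then 1 else 0) - (if i =? l then 1 else 0).

Lemma rsum_incid N k l f :
  (k < N)%nat -> (l < N)%nat -> rsum N (fun i => incid i k l * f i) = f k - f l.
Proof.
  intros Hk Hl.
  rewrite (rsum_ext _ _ (fun i => (if i =? k then f i else 0) - (if i =? l then f i else 0))).
  - rewrite rsum_minus, !rsum_kronecker by assumption; reflexivity.
  - intros i _; unfold incid; destruct (i =? k), (i =? l); ring.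
Qed.

Lemma qform_incid N d k l K v h : (k < N)%nat -> (l < N)%nat ->
  qform N d (fun i al j be => K * (incid i k l * v al) * (incid j k l * v be)) h
  = K * dotd d (diffv h k l) v ^ 2.
Proof.
  intros Hk Hl.
  rewrite (qform_rank_one N d K (fun i al => incid i k l * v al)).
  rewrite (rsum_ext _ _ (fun i => incid i k l * rsum d (fun al => v al * h i al))).
  - rewrite rsum_incid by assumption; unfold dotd, diffv.
    rewrite <- rsum_minus; do 2 f_equal; apply rsum_ext; intros; ring.
  - intros i _; rewrite <- rsum_mult_l; apply rsum_ext; intros; ring.
Qed.

Definition sqdist (d : nat) (y : config) (k l : nat) : R := dotd d (diffv y k l) (diffv y k l).

Lemma sqdist_nonneg d y k l : 0 <= sqdist d y k l.
Proof. apply rsum_nonneg; intros; apply Rle_0_sqr. Qed.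

Lemma diffv_upd y i al t k l be :
  diffv (upd y i al t) k l be
  = diffv y k l be + incid i k l * (if be =? al then 1 else 0) * (t - y i al).
Proof.
  unfold diffv, upd, incid.
  destruct (Nat.eqb_spec k i), (Nat.eqb_spec l i), (Nat.eqb_spec be al),
    (Nat.eqb_spec i k), (Nat.eqb_spec i l); subst; simpl; try lia; ring.
Qed.

Lemma sqdist_upd d y i al t k l : (al < d)%nat ->
  sqdist d (upd y i al t) k l
  = sqdist d y k l + 2 * incid i k l * diffv y k l al * (t - y i al)
    + incid i k l ^ 2 * (t - y i al) ^ 2.
Proof.
  intros Hal; unfold sqdist, dotd.
  rewrite (rsum_ext _ _ (fun be => diffv y k l be * diffv y k l be
     + (if be =? al then 2 * incid i k l * diffv y k l be * (t - y i al)
                         + incid i k l ^ 2 * (t - y i al) ^ 2 else 0))).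
  - rewrite rsum_plus, rsum_kronecker by assumption; ring.
  - intros be _; rewrite diffv_upd; destruct (be =? al); ring.
Qed.

Lemma sqdist_upd_id d y i al k l : (al < d)%nat ->
  sqdist d (upd y i al (y i al)) k l = sqdist d y k l.
Proof. intros Hal; rewrite sqdist_upd by assumption; ring. Qed.

Lemma diffv_upd_id y i al k l be : diffv (upd y i al (y i al)) k l be = diffv y k l be.
Proof. rewrite diffv_upd; ring. Qed.

Lemma is_derive_sqdist_upd d y i al k l : (al < d)%nat ->
  is_derive (fun t => sqdist d (upd y i al t) k l) (y i al) (2 * (incid i k l * diffv y k l al)).
Proof.
  intros Hal.
  apply is_derive_ext with (fun t => sqdist d y k l + 2 * incid i k l * diffv y k l al * (t - y i al)
                                     + incid i k l ^ 2 * (t - y i al) ^ 2).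
  - intros t; symmetry; apply sqdist_upd; assumption.
  - auto_derive; [exact I | ring].
Qed.

Lemma ex_derive_diffv_upd y i al k l be :
  ex_derive (fun t => diffv (upd y i al t) k l be) (y i al).
Proof.
  apply ex_derive_ext with
    (fun t => diffv y k l be + incid i k l * (if be =? al then 1 else 0) * (t - y i al)).
  - intros t; symmetry; apply diffv_upd.
  - auto_derive; exact I.
Qed.

Lemma is_derive_comp_sqrt (f Q : R -> R) t0 q c :
  Q t0 = q -> 0 < q -> ex_derive f (sqrt q) -> is_derive Q t0 (2 * c) ->
  is_derive (fun t => f (sqrt (Q t))) t0 (Derive f (sqrt q) / sqrt q * c).
Proof.
  intros <- Hq Hf HQ.
  assert (Hr : 0 < sqrt (Q t0)) by (apply sqrt_lt_R0; exact Hq).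
  assert (H := is_derive_comp f (fun t => sqrt (Q t)) t0 _ _
                 (Derive_correct _ _ Hf) (is_derive_sqrt Q t0 _ HQ Hq)).
  unfold scal in H; simpl in H; unfold mult in H; simpl in H.
  replace (Derive f (sqrt (Q t0)) / sqrt (Q t0) * c)
    with (2 * c / (2 * sqrt (Q t0)) * Derive f (sqrt (Q t0))) by (field; lra).
  exact H.
Qed.

(* [Derive f (sqrt Q) / sqrt Q * L] is a component of the force of a radial potential f; at a
   critical distance only the variation of [Derive f] contributes to its derivative. *)
Lemma is_derive_slope_critical (f Q L : R -> R) t0 q c w :
  Q t0 = q -> L t0 = w -> 0 < q ->
  ex_derive (Derive f) (sqrt q) -> Derive f (sqrt q) = 0 ->
  is_derive Q t0 (2 * c) -> ex_derive L t0 ->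
  is_derive (fun t => Derive f (sqrt (Q t)) / sqrt (Q t) * L t) t0
    (Derive (Derive f) (sqrt q) / q * c * w).
Proof.
  intros <- <- Hq Hf Hcrit HQ HL.
  assert (Hr : 0 < sqrt (Q t0)) by (apply sqrt_lt_R0; exact Hq).
  assert (Hslope := is_derive_div _ _ t0 _ _
                      (is_derive_comp_sqrt (Derive f) Q t0 _ c eq_refl Hq Hf HQ)
                      (is_derive_sqrt Q t0 _ HQ Hq) (Rgt_not_eq _ _ Hr)).
  assert (H := is_derive_mult _ _ t0 _ _ Hslope (Derive_correct _ _ HL) Rmult_comm).
  unfold plus, mult in H; simpl in H.
  rewrite Hcrit in H.
  assert (Hq2 : Q t0 = sqrt (Q t0) * (sqrt (Q t0) * 1)) by (rewrite Rmult_1_r, sqrt_sqrt; lra).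
  match goal with |- is_derive _ _ ?w =>
    match type of H with is_derive _ _ ?v => replace w with v; [exact H|] end end.
  rewrite <- Hq2; field; lra.
Qed.

Section PairPotential.

Variable U : R -> R.
Hypothesis U_derivable : forall x, ex_derive U x.
Hypothesis U'_derivable : forall x, ex_derive (Derive U) x.
Variables N d : nat.

Lemma pderiv_Hpot y j be : (be < d)%nat ->
  (forall k l, (k < l)%nat -> (l < N)%nat -> 0 < sqdist d y k l) ->
  pderiv j be (Hpot U N d) y
  = pair_sum N (fun k l =>
      Derive U (normd d (diffv y k l)) / normd d (diffv y k l) * (incid j k l * diffv y k l be)).
Proof.
  intros Hbe Hpos; apply is_derive_unique.
  apply (is_derive_pair_sum N (fun k l t => U (normd d (diffv (upd y j be t) k l)))).
  intros k l Hkl Hl.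
  apply is_derive_comp_sqrt with (Q := fun t => sqdist d (upd y j be t) k l).
  - apply sqdist_upd_id; assumption.
  - apply Hpos; assumption.
  - apply U_derivable.
  - apply is_derive_sqdist_upd; assumption.
Qed.

Lemma hess_Hpot z i al j be : (al < d)%nat -> (be < d)%nat ->
  (forall k l, (k < l)%nat -> (l < N)%nat ->
     0 < sqdist d z k l /\ Derive U (normd d (diffv z k l)) = 0) ->
  hess (Hpot U N d) z i al j be
  = pair_sum N (fun k l => Derive (Derive U) (normd d (diffv z k l)) / sqdist d z k l
                           * (incid i k l * diffv z k l al) * (incid j k l * diffv z k l be)).
Proof.
  intros Hal Hbe Hcrit; apply is_derive_unique.
  set (Q k l t := sqdist d (upd z i al t) k l).
  assert (HQ : forall k l, is_derive (Q k l) (z i al) (2 * (incid i k l * diffv z k l al)))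
    by (intros; apply is_derive_sqdist_upd; assumption).
  apply is_derive_ext_loc with (fun t => pair_sum N (fun k l =>
    Derive U (sqrt (Q k l t)) / sqrt (Q k l t) * (incid j k l * diffv (upd z i al t) k l be))).
  - assert (Hloc : locally (z i al) (fun t => forall k l, (k < l)%nat -> (l < N)%nat -> 0 < Q k l t)).
    { apply locally_forall_pairs; intros k l Hkl Hl.
      apply (ex_derive_continuous (Q k l) _ (ex_intro _ _ (HQ k l)) (fun u => 0 < u)).
      apply open_gt; unfold Q; rewrite sqdist_upd_id by assumption; apply Hcrit; assumption. }
    apply filter_imp with (2 := Hloc); intros t Ht.
    symmetry; apply pderiv_Hpot; assumption.
  - apply is_derive_pair_sum; intros k l Hkl Hl.
    destruct (Hcrit k l Hkl Hl) as [Hq Hzero].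
    apply is_derive_slope_critical.
    + apply sqdist_upd_id; assumption.
    + rewrite diffv_upd_id; reflexivity.
    + exact Hq.
    + apply U'_derivable.
    + exact Hzero.
    + apply HQ.
    + apply ex_derive_scal, ex_derive_diffv_upd.
Qed.

End PairPotential.

Lemma Derive_min_pos (f : R -> R) a : ex_derive f a -> 0 < a ->
  (forall r, 0 <= r -> f a <= f r) -> Derive f a = 0.
Proof.
  intros Hf Ha Hmin.
  assert (Hd : derivable_pt_lim f a (Derive f a))
    by (apply is_derive_Reals, Derive_correct, Hf).
  change (Derive f a) with (derive_pt f a (exist _ (Derive f a) Hd)).
  apply (deriv_minimum f 0 (2 * a)); try lra.
  intros x Hx _; apply Hmin; lra.
Qed.

Lemma Derive_zero_beyond (f : R -> R) r :
  (forall s, r < s -> f s = 0) -> forall s, r < s -> Derive f s = 0.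
Proof.
  intros Hf s Hs.
  rewrite (Derive_ext_loc f (fun _ => 0)); [apply Derive_const|].
  apply filter_imp with (fun u => r < u); [exact Hf | apply open_gt; exact Hs].
Qed.

Lemma b_of_lt (U : R -> R) r0 : Rbar_lt (b_of U) (Finite r0) ->
  exists r, 0 < r /\ r < r0 /\ forall s, r < s -> U s = 0.
Proof.
  intros Hb; apply NNPP; intros Hnone.
  assert (Hlb : is_lb_Rbar (fun r => 0 < r /\ forall s, r < s -> U s = 0) (Finite r0)).
  { intros x [Hx HUx]; simpl; destruct (Rle_dec r0 x) as [|Hlt]; [assumption|].
    exfalso; apply Hnone; exists x; repeat split; auto; lra. }
  apply (Rbar_lt_not_le _ _ Hb), (proj2 (Glb_Rbar_correct _)), Hlb.
Qed.

Lemma bond_sum_pair_sum a N d z h :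
  bond_sum a N d z h
  = pair_sum N (fun k l => if Req_EM_T (normd d (diffv z k l)) a
                          then dotd d (diffv h k l) (diffv z k l) ^ 2 else 0).
Proof. reflexivity. Qed.

Section Crystal.

Variables (U : R -> R) (a : R) (N d : nat) (z : config).
Hypothesis U_derivable : forall x, ex_derive U x.
Hypothesis a_pos : 0 < a.
Hypothesis a_min : forall r, 0 <= r -> U a <= U r.
Hypothesis z_crystal : crystal U a N d z.

Lemma crystal_pair k l : (k < l)%nat -> (l < N)%nat ->
  0 < sqdist d z k l /\ Derive U (normd d (diffv z k l)) = 0 /\
  Derive (Derive U) (normd d (diffv z k l)) / sqdist d z k l
  = if Req_EM_T (normd d (diffv z k l)) a then Derive (Derive U) a / a ^ 2 else 0.
Proof.
  intros Hkl Hl.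
  set (r := normd d (diffv z k l)).
  assert (Hr2 : sqdist d z k l = r * r) by (symmetry; apply sqrt_sqrt, sqdist_nonneg).
  rewrite Hr2.
  destruct (Req_EM_T r a) as [Hra|Hra].
  - rewrite Hra; repeat split.
    + apply Rmult_lt_0_compat; exact a_pos.
    + apply Derive_min_pos; auto.
    + simpl; rewrite Rmult_1_r; reflexivity.
  - destruct (z_crystal k l) as [Heq|Hb]; try lia; [exact (False_ind _ (Hra Heq))|].
    destruct (b_of_lt U r Hb) as (r' & Hr' & Hr'r & Hvanish).
    assert (HU' := Derive_zero_beyond U r' Hvanish).
    repeat split.
    + apply Rmult_lt_0_compat; lra.
    + apply HU'; exact Hr'r.
    + rewrite (Derive_zero_beyond (Derive U) r' HU' r Hr'r); unfold Rdiv; ring.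
Qed.

Hypothesis U'_derivable : forall x, ex_derive (Derive U) x.

Lemma hess_form_crystal h :
  hess_form N d (Hpot U N d) z h = Derive (Derive U) a / a ^ 2 * bond_sum a N d z h.
Proof.
  change (hess_form N d (Hpot U N d) z h) with (qform N d (hess (Hpot U N d) z) h).
  rewrite (qform_ext _ _ _ (fun i al j be => pair_sum N (fun k l =>
     Derive (Derive U) (normd d (diffv z k l)) / sqdist d z k l
     * (incid i k l * diffv z k l al) * (incid j k l * diffv z k l be)))).
  2: { intros i al j be _ Hal _ Hbe; apply hess_Hpot; auto.
       intros k l Hkl Hl; destruct (crystal_pair k l Hkl Hl) as (Hq & Hcrit & _); split; assumption. }
  rewrite qform_pair_sum, bond_sum_pair_sum, <- pair_sum_mult_l.
  apply pair_sum_ext; intros k l Hkl Hl.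
  rewrite qform_incid by lia; rewrite (proj2 (proj2 (crystal_pair k l Hkl Hl))).
  destruct Req_EM_T; ring.
Qed.

End Crystal.

Theorem lemma2p1 (d N : nat) (U : R -> R) (a : R) (z h : config) :
  (1 <= d)%nat ->
  (* U in C^3(R) *)
  (forall k x, (k <= 3)%nat -> ex_derive_n U k x) ->
  (forall x, continuous (Derive_n U 3) x) ->
  (* compact support *)
  (exists M, forall x, M < Rabs x -> U x = 0) ->
  (* U even *)
  (forall x, U (- x) = U x) ->
  (* a > 0 is the unique minimizer of U on [0, +oo) *)
  0 < a ->
  (forall r, 0 <= r -> U a <= U r) ->
  (forall r, 0 <= r -> U r <= U a -> r = a) ->
  (* c := U''(a) > 0 *)
  0 < Derive_n U 2 a ->
  crystal U a N d z ->
  hess_form N d (Hpot U N d) z h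
    = Derive_n U 2 a / a ^ 2 * bond_sum a N d z h
  /\ 0 <= hess_form N d (Hpot U N d) z h.
Proof.
  intros _ HUn _ _ _ Ha Hmin _ Hc Hcr.
  assert (HU : forall x, ex_derive U x) by (intros x; exact (HUn 1%nat x ltac:(lia))).
  assert (HU' : forall x, ex_derive (Derive U) x) by (intros x; exact (HUn 2%nat x ltac:(lia))).
  change (Derive_n U 2 a) with (Derive (Derive U) a) in *.
  rewrite (hess_form_crystal U a N d z HU Ha Hmin Hcr HU'); split; [reflexivity|].
  apply Rmult_le_pos.
  - apply Rlt_le, Rdiv_lt_0_compat; [exact Hc | apply pow_lt, Ha].
  - rewrite bond_sum_pair_sum; apply pair_sum_nonneg; intros k l _ _.
    destruct Req_EM_T; [apply pow2_ge_0 | lra].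
Qed.
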